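(* Let $g_1, g_2 \in \mathbb{R}^d$, let $G = (g_1, g_2) \in \mathbb{R}^{d \times 2}$ be the matrix with columns $g_1, g_2$, and let $\alpha = (\alpha_1, \alpha_2)^T$ with $\alpha_1, \alpha_2 > 0$. If $G^T G \alpha = \frac{1}{\alpha}$, then $\frac{\alpha_1}{\alpha_2} = \frac{\|g_2\|}{\|g_1\|}$.
   Context: $\frac{1}{\alpha}$ denotes the componentwise reciprocal $(1/\alpha_1, 1/\alpha_2)^T$, and $\|\cdot\|$ is the Euclidean norm. *)

From HB Require Import structures.
From mathcomp Require Import all_boot all_order all_algebra.
Set Implicit Arguments. Unset Strict Implicit. Unset Printing Implicit Defensive.
Import Order.TTheory GRing.Theory Num.Theory.
Local Open Scope ring_scope.

Definition enorm (R : rcfType) (d : nat) (v : 'cV[R]_d) : R :=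
  Num.sqrt (\sum_(i < d) v i 0 ^+ 2).

Definition cinv (R : rcfType) (n : nat) (a : 'cV[R]_n) : 'cV[R]_n :=
  \col_i (a i 0)^-1.

From mathcomp Require Import all_boot all_order all_algebra.
Set Implicit Arguments. Unset Strict Implicit. Unset Printing Implicit Defensive.
Import Order.TTheory GRing.Theory Num.Theory.
Local Open Scope ring_scope.

(* Put u_i := alpha_i g_i and v := G alpha = u_1 + u_2.  Row i of the hypothesis
   reads <g_i, v> = 1/alpha_i, i.e. <u_1, u_1 + u_2> = 1 = <u_2, u_1 + u_2>;
   subtracting gives |u_1|^2 = |u_2|^2, that is alpha_1 |g_1| = alpha_2 |g_2|.
   Moreover g_1 != 0 since <g_1, v> = 1/alpha_1 != 0, so we may divide. *)

Section VectorDot.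

Variables (R : rcfType) (n : nat).
Implicit Types (u v w : 'cV[R]_n) (a : R).

Definition vdot u v : R := (u^T *m v) 0 0.

Lemma vdotE u v : vdot u v = \sum_(i < n) u i 0 * v i 0.
Proof. by rewrite /vdot mxE; apply: eq_bigr => i _; rewrite mxE. Qed.

Lemma vdotC u v : vdot u v = vdot v u.
Proof. by rewrite !vdotE; apply: eq_bigr => i _; rewrite mulrC. Qed.

Lemma vdotDr u v w : vdot u (v + w) = vdot u v + vdot u w.
Proof. by rewrite /vdot mulmxDr mxE. Qed.

Lemma vdotZl a u v : vdot (a *: u) v = a * vdot u v.
Proof. by rewrite /vdot linearZ /= -scalemxAl mxE. Qed.

Lemma vdot0l v : vdot 0 v = 0.
Proof. by rewrite /vdot trmx0 mul0mx mxE. Qed.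

Lemma enorm_ge0 v : 0 <= enorm v.
Proof. exact: sqrtr_ge0. Qed.

Lemma enorm_sqr v : enorm v ^+ 2 = vdot v v.
Proof.
rewrite /enorm sqr_sqrtr ?sumr_ge0 // => [|i _]; last exact: sqr_ge0.
by rewrite vdotE; apply: eq_bigr => i _; rewrite expr2.
Qed.

Lemma enorm_eq0 v : (enorm v == 0) = (v == 0).
Proof.
apply/idP/eqP => [|->]; last by rewrite -sqrf_eq0 enorm_sqr vdot0l.
rewrite -sqrf_eq0 enorm_sqr vdotE psumr_eq0 => [/allP v0|i _]; last first.
  by rewrite -expr2 sqr_ge0.
apply/matrixP => i j; apply/eqP; rewrite ord1 mxE -sqrf_eq0 expr2.
exact: implyP (v0 i (mem_index_enum _)) isT.
Qed.

Lemma enormZ a v : enorm (a *: v) = `|a| * enorm v.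
Proof.
apply/eqP; rewrite -(eqrXn2 (ltn0Sn 1)) ?mulr_ge0 ?enorm_ge0 //.
by rewrite exprMn real_normK ?num_real // !enorm_sqr vdotZl vdotC vdotZl mulrA.
Qed.

Lemma enorm_eq_of_vdotDr u w : vdot u (u + w) = vdot w (u + w) ->
  enorm u = enorm w.
Proof.
rewrite !vdotDr [vdot w u]vdotC [in RHS]addrC => /addIr uu_ww.
by apply/eqP; rewrite -(eqrXn2 (ltn0Sn 1)) ?enorm_ge0 // !enorm_sqr uu_ww.
Qed.

End VectorDot.

Lemma mulmx_sum_col (R : comPzSemiRingType) (m n : nat) (A : 'M[R]_(m, n))
    (v : 'cV[R]_n) :
  A *m v = \sum_j v j 0 *: col j A.
Proof.
apply/matrixP => i k; rewrite !mxE summxE ord1.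
by apply: eq_bigr => j _; rewrite !mxE mulrC.
Qed.

Lemma trmx_mulmx_vdot (R : rcfType) (m n : nat) (A : 'M[R]_(m, n))
    (v : 'cV[R]_m) (j : 'I_n) :
  (A^T *m v) j 0 = vdot (col j A) v.
Proof. by rewrite /vdot tr_col -row_mul [RHS]mxE. Qed.

Theorem corollary1 (R : rcfType) (d : nat) (G : 'M[R]_(d, 2)) (alpha : 'cV[R]_2) :
  0 < alpha 0 0 -> 0 < alpha 1 0 ->
  G^T *m G *m alpha = cinv alpha ->
  alpha 0 0 / alpha 1 0 = enorm (col 1 G) / enorm (col 0 G).
Proof.
move=> alpha0_gt0 alpha1_gt0; rewrite -mulmxA.
set v := G *m alpha => Gv.
have vdot_col j : vdot (col j G) v = (alpha j 0)^-1.
  by rewrite -trmx_mulmx_vdot Gv mxE.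
have vdotZ_col j : 0 < alpha j 0 -> vdot (alpha j 0 *: col j G) v = 1.
  by move=> alpha_gt0; rewrite vdotZl vdot_col mulfV ?gt_eqF.
have v_split : v = alpha 0 0 *: col 0 G + alpha 1 0 *: col 1 G.
  rewrite /v mulmx_sum_col big_ord_recl big_ord1.
  by have -> : lift ord0 ord0 = 1 :> 'I_2 by apply/val_inj.
have norms_eq : alpha 0 0 * enorm (col 0 G) = alpha 1 0 * enorm (col 1 G).
  rewrite -(gtr0_norm alpha0_gt0) -(gtr0_norm alpha1_gt0) -!enormZ.
  by apply: enorm_eq_of_vdotDr; rewrite -v_split !vdotZ_col.
have col0_neq0 : enorm (col 0 G) != 0.
  have : vdot (col 0 G) v != 0 by rewrite vdot_col invr_eq0 gt_eqF.
  by rewrite enorm_eq0; apply: contraNneq => ->; rewrite vdot0l.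
by apply/eqP; rewrite eqr_div ?(gt_eqF alpha1_gt0) // norms_eq mulrC.
Qed.
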